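(* Let $(\mathbf k((G)),l)$ be a series field with prelogarithmic section and $\psi$ a morphism from $(\mathbf k((G)),l)$ to itself. Let $U\subseteq H$ be subgroups of $G$ satisfying $(\dagger)$: $\mathrm{Log}(h)<|f|$ for all $h\in H$ and all nonzero $f\in\mathbf k((H^{>U}))$. Then $\psi(U)\subseteq\psi(H)$ also satisfy $(\dagger)$, i.e. $\mathrm{Log}(h_1)<|f_1|$ for all $h_1\in\psi(H)$ and all nonzero $f_1\in\mathbf k((\psi(H)^{>\psi(U)}))$.
   Context: Let $\mathbf k$ be an ordered field and $(G,\cdot,<)$ a totally ordered abelian group (written multiplicatively). $\mathbf k((G))$ denotes the field of generalized power series $\alpha=\sum_{g\in G}\alpha(g)\,g$ ($\alpha(g)\in\mathbf k$) with anti-well-ordered support, usual operations, canonical valuation $v(\alpha)=\max\operatorname{supp}\alpha$ and ordering $\alpha>0$ iff $\alpha(v(\alpha))>0$. For $S\subseteq G$, $\mathbf k((S))=\{\alpha:\operatorname{supp}\alpha\subseteq S\}$; for a subgroup $H$ and $A\subseteq G$, $H^{>A}=\{h\in H:h>a\ \forall a\in A\}$. A prelogarithmic section is an order-preserving group embedding $l:(G,\cdot)\to(\mathbf k((G^{>1})),+)$ (with $G^{>1}=\{g>1\}$). For $g\in G$, $\mathrm{Log}(g)=l(g)$ ($\mathrm{Log}$ being the logarithm of the EL-series field $\mathbf k((G))^{EL}$, which extends $l$). An order-preserving group embedding $\psi:G\to G$, extended to $\mathbf k((G))$ by $\psi(\sum a_gg)=\sum a_g\psi(g)$, is a morphism of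 $(\mathbf k((G)),l)$ to itself if $\psi\circ l=l\circ\psi$ on $G$. *)

From HB Require Import structures.
From mathcomp Require Import all_boot all_order all_algebra.
From Stdlib Require Import ClassicalEpsilon.
Set Implicit Arguments. Unset Strict Implicit. Unset Printing Implicit Defensive.
Import Order.TTheory GRing.Theory Num.Theory.
Local Open Scope ring_scope.

Record oagroup := OAGroup {
  oag_car :> Type;
  oag_mul : oag_car -> oag_car -> oag_car;
  oag_one : oag_car;
  oag_inv : oag_car -> oag_car;
  oag_lt : oag_car -> oag_car -> Prop;
  oag_mulA : forall x y z, oag_mul x (oag_mul y z) = oag_mul (oag_mul x y) z;
  oag_mulC : forall x y, oag_mul x y = oag_mul y x;
  oag_mul1 : forall x, oag_mul oag_one x = x;
  oag_mulV : forall x, oag_mul (oag_inv x) x = oag_one;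
  oag_lt_irr : forall x, ~ oag_lt x x;
  oag_lt_trans : forall x y z, oag_lt x y -> oag_lt y z -> oag_lt x z;
  oag_lt_total : forall x y, oag_lt x y \/ x = y \/ oag_lt y x;
  oag_lt_mul : forall x y z, oag_lt x y -> oag_lt (oag_mul x z) (oag_mul y z)
}.

Section Series.
Variables (k : realFieldType) (G : oagroup).

Definition glt := @oag_lt G.
Definition gle (x y : G) := glt x y \/ x = y.

Definition anti_well_ordered (S : G -> Prop) : Prop :=
  forall P : G -> Prop, (forall x, P x -> S x) -> (exists x, P x) ->
    exists m, P m /\ forall x, P x -> gle x m.

(* A formal sum  sum_g alpha(g) g  is represented by its coefficient map. *)
Definition support (a : G -> k) : G -> Prop := fun g => a g != 0.

(* alpha is an element of k((S)): anti-well-ordered support contained in S.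
   k((G)) itself is  is_series_on (fun _ => True). *)
Definition is_series_on (S : G -> Prop) (a : G -> k) : Prop :=
  anti_well_ordered (support a) /\ (forall g, support a g -> S g).

Definition sadd (a b : G -> k) : G -> k := fun g => a g + b g.
Definition sopp (a : G -> k) : G -> k := fun g => - a g.

(* alpha > 0 iff alpha(v(alpha)) > 0, where v(alpha) = max supp alpha. *)
Definition spos (a : G -> k) : Prop :=
  exists g, 0 < a g /\ forall h, glt g h -> a h = 0.
Definition slt (a b : G -> k) : Prop := spos (sadd b (sopp a)).

Definition sabs (a : G -> k) : G -> k :=
  if excluded_middle_informative (spos a) then a else sopp a.

Definition G_gt1 : G -> Prop := fun g => glt (oag_one G) g.

Definition prelog_section (l : G -> (G -> k)) : Prop :=
  (forall g, is_series_on G_gt1 (l g)) /\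
  (forall g h, l (oag_mul g h) = sadd (l g) (l h)) /\
  (forall g h, glt g h -> slt (l g) (l h)).

Definition oag_embedding (psi : G -> G) : Prop :=
  (forall g h, psi (oag_mul g h) = oag_mul (psi g) (psi h)) /\
  (forall g h, glt g h -> glt (psi g) (psi h)).

(* Extension of psi to series: psi(sum a_g g) = sum a_g psi(g). *)
Definition spush (psi : G -> G) (a : G -> k) : G -> k := fun g' =>
  match excluded_middle_informative (exists g, psi g = g') with
  | left e => a (proj1_sig (constructive_indefinite_description _ e))
  | right _ => 0
  end.

Definition series_morphism (l : G -> (G -> k)) (psi : G -> G) : Prop :=
  oag_embedding psi /\ forall g, spush psi (l g) = l (psi g).

Definition is_subgroup (H : G -> Prop) : Prop :=
  H (oag_one G) /\ (forall x y, H x -> H y -> H (oag_mul x y)) /\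
  (forall x, H x -> H (oag_inv x)).

Definition above (H A : G -> Prop) : G -> Prop :=
  fun h => H h /\ forall a, A a -> glt a h.

Definition gimage (psi : G -> G) (S : G -> Prop) : G -> Prop :=
  fun g => exists s, S s /\ psi s = g.

(* Condition (dagger) for U <= H, with Log(h) = l(h) for h in G. *)
Definition dagger (l : G -> (G -> k)) (U H : G -> Prop) : Prop :=
  forall h, H h -> forall f : G -> k, is_series_on (above H U) f ->
    ~ (forall g, f g = 0) -> slt (l h) (sabs f).

End Series.

From mathcomp Require Import all_boot all_order all_algebra.
From Stdlib Require Import ClassicalEpsilon Classical FunctionalExtensionality.
Import Order.TTheory GRing.Theory Num.Theory.
Local Open Scope ring_scope.
Set Implicit Arguments.

(* Let f1 be a nonzero series supported in psi(H)^{>psi(U)} and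
   h1 = psi(h) with h in H.  Since the support of f1 lies in the image of the
   embedding psi, the pulled-back series f = f1 o psi is a nonzero element of
   k((H^{>U})) and its push-forward psi(f) is f1 again.  Condition (dagger)
   for U, H gives l(h) < |f|.  The push-forward map a |-> psi(a) is additive,
   preserves and reflects positivity, hence is order-preserving and commutes
   with |.|; together with psi(l(h)) = l(psi(h)) this yields
   l(h1) = psi(l(h)) < psi(|f|) = |psi(f)| = |f1|. *)

Section Pushforward.
Variables (k : realFieldType) (G : oagroup) (psi : G -> G).
Hypothesis psi_mono : forall {g h}, glt g h -> glt (psi g) (psi h).

Lemma psi_inj g h : psi g = psi h -> g = h.
Proof.
move=> E; have [L|[//|L]] := oag_lt_total g h.
- by have := psi_mono L; rewrite E => /oag_lt_irr.
- by have := psi_mono L; rewrite E => /oag_lt_irr.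
Qed.

Lemma psi_reflect g h : glt (psi g) (psi h) -> glt g h.
Proof.
move=> L; have [//|[E|L2]] := oag_lt_total g h.
- by subst; case: (oag_lt_irr L).
- by case: (oag_lt_irr (oag_lt_trans L (psi_mono L2))).
Qed.

Lemma spush_psi (a : G -> k) g : spush psi a (psi g) = a g.
Proof.
rewrite /spush; case: excluded_middle_informative => [e|n].
- by case: (constructive_indefinite_description _ e) => x /= /psi_inj ->.
- by case: n; exists g.
Qed.

Lemma spush_out (a : G -> k) g' :
  ~ (exists g, psi g = g') -> spush psi a g' = 0.
Proof. by rewrite /spush; case: excluded_middle_informative. Qed.

Lemma spushD (a b : G -> k) :
  spush psi (sadd a b) = sadd (spush psi a) (spush psi b).
Proof.
apply: functional_extensionality => g'.
case: (classic (exists g, psi g = g')) => [[g <-]|n].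
- by rewrite /sadd !spush_psi.
- by rewrite /sadd !spush_out // addr0.
Qed.

Lemma spushN (a : G -> k) : spush psi (sopp a) = sopp (spush psi a).
Proof.
apply: functional_extensionality => g'.
case: (classic (exists g, psi g = g')) => [[g <-]|n].
- by rewrite /sopp !spush_psi.
- by rewrite /sopp !spush_out // oppr0.
Qed.

(* Push-forward preserves and reflects positivity: the leading coefficient
   of a sits at v(a), that of psi(a) at psi(v(a)). *)
Lemma spush_pos (a : G -> k) : spos a <-> spos (spush psi a).
Proof.
split.
- move=> [g [Pg Z]]; exists (psi g); rewrite spush_psi; split=> // g' Lg'.
  case: (classic (exists h, psi h = g')) => [[h Eh]|n]; last exact: spush_out.
  by rewrite -Eh spush_psi; apply/Z/psi_reflect; rewrite Eh.
- move=> [g' [Pg' Z]].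
  case: (classic (exists g, psi g = g')) => [[g Eg]|n]; last first.
    by move: Pg'; rewrite spush_out // ltxx.
  subst g'; exists g; rewrite -(spush_psi a g); split=> // h Lh.
  by rewrite -spush_psi; apply/Z/psi_mono.
Qed.

Lemma spush_lt (a b : G -> k) : slt a b -> slt (spush psi a) (spush psi b).
Proof. by rewrite /slt -spushN -spushD => /spush_pos. Qed.

Lemma spush_abs (a : G -> k) : spush psi (sabs a) = sabs (spush psi a).
Proof.
rewrite /sabs; have Epos := spush_pos a.
case: excluded_middle_informative => P1; case: excluded_middle_informative => P2.
- by [].
- by case: P2; apply/Epos.
- by case: P1; apply/Epos.
- exact: spushN.
Qed.

(* Pulling back along psi preserves anti-well-ordered supports: a nonempty
   set of the pulled-back support maps to one in the original support, and
   the preimage of its maximum is a maximum. *)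
Lemma pullback_series (S : G -> Prop) (f : G -> k) :
  is_series_on S f -> is_series_on (fun g => S (psi g)) (f \o psi).
Proof.
move=> [f_awo f_supp]; split=> [P P_supp [x Px]|g /f_supp //].
have [_ [[m [Pm <-]] m_max]] :
    exists m', (fun g' => exists g, P g /\ psi g = g') m' /\
      forall y, (fun g' => exists g, P g /\ psi g = g') y -> gle y m'.
  apply: f_awo; last by exists (psi x), x.
  by move=> g' [g [Pg <-]]; apply: P_supp.
exists m; split=> // y Py.
case: (m_max (psi y)) => [|L|E]; first by exists y.
- by left; apply: psi_reflect.
- by right; apply: psi_inj.
Qed.

Lemma above_gimage (U H : G -> Prop) g :
  above (gimage psi H) (gimage psi U) (psi g) -> above H U g.
Proof.
move=> [[s [Hs /psi_inj Es]] gtU]; subst s; split=> // u Uu.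
by apply/psi_reflect/gtU; exists u.
Qed.

Lemma spush_pullback (f : G -> k) :
  (forall g', support f g' -> exists g, psi g = g') ->
  spush psi (f \o psi) = f.
Proof.
move=> f_img; apply: functional_extensionality => g'.
case: (classic (exists g, psi g = g')) => [[g <-]|n]; first exact: spush_psi.
rewrite spush_out //; apply/esym/eqP; apply: contraT => /f_img.
by move=> /n.
Qed.

End Pushforward.

(* Only the morphism property of psi and (dagger) for U, H are used. *)
Theorem lemma8 (k : realFieldType) (G : oagroup) (l : G -> (G -> k))
  (psi : G -> G) (U H : G -> Prop) :
  prelog_section l -> series_morphism l psi ->
  is_subgroup U -> is_subgroup H -> (forall u, U u -> H u) ->
  dagger l U H ->
  dagger l (gimage psi U) (gimage psi H).
Proof.
move=> _ [[_ psi_mono] l_psi] _ _ _ dagger_UH _ [h [Hh <-]] f1 f1_ser f1_nz.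
have f1_img g' : support f1 g' -> exists g, psi g = g'.
  by move=> /(proj2 f1_ser) [[g [_ Eg]] _]; exists g.
have f_ser : is_series_on (above H U) (f1 \o psi).
  have [f_awo f_supp] := pullback_series _ psi_mono f1_ser.
  by split=> // g /f_supp /above_gimage; apply.
have f_nz : ~ (forall g, (f1 \o psi) g = 0).
  move=> f_zero; apply: f1_nz => g'.
  have [//|nz] := eqVneq (f1 g') 0; have [g Eg] := f1_img _ nz.
  by move: nz; rewrite -Eg -[f1 (psi g)]/((f1 \o psi) g) f_zero eqxx.
rewrite -l_psi -(spush_pullback _ _ _ psi_mono _ f1_img) -(spush_abs _ _ _ psi_mono).
exact/(spush_lt _ psi_mono)/dagger_UH.
Qed.
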